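(* Let $(M,\varphi,\xi,\eta,g)$ be an almost contact metric manifold. If $M$ satisfies the $(G1)$ identity then it satisfies the $(G2)$ identity, and if it satisfies the $(G2)$ identity then it satisfies the $(G3)$ identity. Equivalently, for any class $\mathcal L$ of almost contact metric manifolds, denoting by $\mathcal L_i$ the subclass of those satisfying $(Gi)$, one has $\mathcal L_1\subseteq\mathcal L_2\subseteq\mathcal L_3\subseteq\mathcal L$.
   Context: An almost contact metric manifold $(M,\varphi,\xi,\eta,g)$: $\varphi$ a $(1,1)$-tensor, $\xi$ a vector field, $\eta$ a $1$-form, $g$ a Riemannian metric with $\eta(\xi)=1$, $\varphi^2=-I+\eta\otimes\xi$, $g(\varphi X,\varphi Y)=g(X,Y)-\eta(X)\eta(Y)$. Curvature conventions: $R_{XY}Z=\nabla_X\nabla_YZ-\nabla_Y\nabla_XZ-\nabla_{[X,Y]}Z$, $R(X,Y,Z,W)=-g(R_{XY}Z,W)$. For all $X,Y,Z,W\in\chi(M)$ the identities are: $(G1)$: $R(X,Y,\varphi Z,\varphi W)-R(X,Y,Z,W)=g(Y,\varphi W)g(X,\varphi Z)-g(X,\varphi W)g(Y,\varphi Z)+g(X,W)g(Y,Z)-g(Y,W)g(X,Z)$; $(G2)$: $R(X,Y,Z,W)=R(\varphi X,Y,Z,\varphi W)+R(X,\varphi Y,Z,\varphi W)+R(X,Y,\varphi Z,\varphi W)+g(X,Z)\eta(W)\eta(Y)-g(Z,Y)\eta(X)\eta(W)$; $(G3)$: $R(X,Y,Z,W)=R(\varphi X,\varphi Y,\varphi Z,\varphi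 W)+g(X,Z)\eta(W)\eta(Y)-g(Z,Y)\eta(X)\eta(W)+g(Y,W)\eta(X)\eta(Z)-g(X,W)\eta(Y)\eta(Z)$. *)

(* Pointwise (tangent-space) model of an almost contact
   metric manifold together with its Riemann curvature tensor. *)
From mathcomp Require Import all_boot all_order all_algebra.
From mathcomp Require Import reals.
Set Implicit Arguments. Unset Strict Implicit. Unset Printing Implicit Defensive.
Import Order.TTheory GRing.Theory Num.Theory.
Local Open Scope ring_scope.

Section Defs.
Variables (R : realType) (V : vectType R).

Definition linear_map (f : V -> V) : Prop :=
  forall (a : R) (x y : V), f (a *: x + y) = a *: f x + f y.

Definition linear_form (f : V -> R) : Prop :=
  forall (a : R) (x y : V), f (a *: x + y) = a * f x + f y.

Definition almost_contact_metric (phi : V -> V) (xi : V) (eta : V -> R)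
    (g : V -> V -> R) : Prop :=
  linear_map phi /\ linear_form eta /\
      (forall y, linear_form (fun x => g x y)) /\
      (forall x y, g x y = g y x) /\
      (forall x, x != 0 -> 0 < g x x) /\
      eta xi = 1 /\
      (forall X, phi (phi X) = - X + eta X *: xi) /\
      (forall X Y, g (phi X) (phi Y) = g X Y - eta X * eta Y).

(* The (0,4) Riemann curvature tensor R(X,Y,Z,W) = -g(R_{XY}Z,W):
   multilinear, with the curvature symmetries and the first Bianchi identity. *)
Definition curvature_tensor (Rt : V -> V -> V -> V -> R) : Prop :=
  (forall Y Z W, linear_form (fun X => Rt X Y Z W)) /\
      (forall X Z W, linear_form (fun Y => Rt X Y Z W)) /\
      (forall X Y W, linear_form (fun Z => Rt X Y Z W)) /\
      (forall X Y Z, linear_form (fun W => Rt X Y Z W)) /\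
      (forall X Y Z W, Rt X Y Z W = - Rt Y X Z W) /\
      (forall X Y Z W, Rt X Y Z W = - Rt X Y W Z) /\
      (forall X Y Z W, Rt X Y Z W = Rt Z W X Y) /\
      (forall X Y Z W, Rt X Y Z W + Rt Y Z X W + Rt Z X Y W = 0).

Definition G1 (phi : V -> V) (eta : V -> R) (g : V -> V -> R)
    (Rt : V -> V -> V -> V -> R) : Prop :=
  forall X Y Z W,
    Rt X Y (phi Z) (phi W) - Rt X Y Z W =
    g Y (phi W) * g X (phi Z) - g X (phi W) * g Y (phi Z)
    + g X W * g Y Z - g Y W * g X Z.

Definition G2 (phi : V -> V) (eta : V -> R) (g : V -> V -> R)
    (Rt : V -> V -> V -> V -> R) : Prop :=
  forall X Y Z W,
    Rt X Y Z W =
    Rt (phi X) Y Z (phi W) + Rt X (phi Y) Z (phi W) + Rt X Y (phi Z) (phi W)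
    + g X Z * eta W * eta Y - g Z Y * eta X * eta W.

Definition G3 (phi : V -> V) (eta : V -> R) (g : V -> V -> R)
    (Rt : V -> V -> V -> V -> R) : Prop :=
  forall X Y Z W,
    Rt X Y Z W =
    Rt (phi X) (phi Y) (phi Z) (phi W)
    + g X Z * eta W * eta Y - g Z Y * eta X * eta W
    + g Y W * eta X * eta Z - g X W * eta Y * eta Z.

End Defs.

(* Subtracting from R the curvature tensor R1 of constant sectional curvature 1
   turns each (Gi) into a metric-free identity for S := R - R1: (G1) says that
   S is phi-invariant in its last pair, (G2) says
   S(X,Y,Z,W) = S(phiX,Y,Z,phiW) + S(X,phiY,Z,phiW) + S(X,Y,phiZ,phiW) and (G3)
   says that S is phi-invariant in all four slots; the eta-terms of (G2) and
   (G3) are exactly the defects of R1 under phi.  Each of these identities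
   forces S to vanish on xi, so that phi^2 acts as -1 in every slot of S, and
   the implications between them then follow by linear combinations of
   instances of the identities. *)
From mathcomp Require Import all_boot all_order all_algebra.
From mathcomp Require Import reals.
From mathcomp Require Import ring lra.
Set Implicit Arguments. Unset Strict Implicit. Unset Printing Implicit Defensive.
Import Order.TTheory GRing.Theory Num.Theory.
Local Open Scope ring_scope.

Section LinearMaps.
Variables (R : realType) (V : vectType R).

Lemma linear_form0 (f : V -> R) : linear_form f -> f 0 = 0.
Proof.
move=> lf; have := lf 1 0 0; rewrite scaler0 addr0 mul1r => e.
by apply: (addrI (f 0)); rewrite addr0 -e.
Qed.

Lemma linear_formD (f : V -> R) x y : linear_form f -> f (x + y) = f x + f y.
Proof. by move=> lf; rewrite -[x in LHS]scale1r lf mul1r. Qed.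

Lemma linear_formZ (f : V -> R) a x : linear_form f -> f (a *: x) = a * f x.
Proof. by move=> lf; rewrite -[_ *: _]addr0 lf linear_form0 // addr0. Qed.

Lemma linear_formN (f : V -> R) x : linear_form f -> f (- x) = - f x.
Proof. by move=> lf; rewrite -scaleN1r linear_formZ // mulN1r. Qed.

Lemma linear_map0 (f : V -> V) : linear_map f -> f 0 = 0.
Proof.
move=> lf; have := lf 1 0 0; rewrite scaler0 addr0 scale1r => e.
by apply: (addrI (f 0)); rewrite addr0 -e.
Qed.

Lemma linear_mapD (f : V -> V) x y : linear_map f -> f (x + y) = f x + f y.
Proof. by move=> lf; rewrite -[x in LHS]scale1r lf scale1r. Qed.

Lemma linear_mapZ (f : V -> V) a x : linear_map f -> f (a *: x) = a *: f x.
Proof. by move=> lf; rewrite -[_ *: _]addr0 lf linear_map0 // addr0. Qed.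

Lemma linear_mapN (f : V -> V) x : linear_map f -> f (- x) = - f x.
Proof. by move=> lf; rewrite -scaleN1r linear_mapZ // scaleN1r. Qed.

End LinearMaps.

Section CurvatureTensors.
Variables (R : realType) (V : vectType R).

Lemma curvature_tensorB (T1 T2 : V -> V -> V -> V -> R) :
  curvature_tensor T1 -> curvature_tensor T2 ->
  curvature_tensor (fun X Y Z W => T1 X Y Z W - T2 X Y Z W).
Proof.
move=> [L1 [L2 [L3 [L4 [A12 [A34 [P B]]]]]]].
move=> [M1 [M2 [M3 [M4 [N12 [N34 [Q C]]]]]]].
split; [|split; [|split; [|split; [|split; [|split; [|split]]]]]].
- by move=> Y Z W a x y /=; rewrite L1 M1; ring.
- by move=> X Z W a x y /=; rewrite L2 M2; ring.
- by move=> X Y W a x y /=; rewrite L3 M3; ring.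
- by move=> X Y Z a x y /=; rewrite L4 M4; ring.
- by move=> X Y Z W; rewrite A12 N12; ring.
- by move=> X Y Z W; rewrite A34 N34; ring.
- by move=> X Y Z W; rewrite P Q.
- by move=> X Y Z W; have := B X Y Z W; have := C X Y Z W; lra.
Qed.

(* With the convention R(X,Y,Z,W) = -g(R_XY Z, W), this is the curvature
   tensor of constant sectional curvature 1 with respect to g. *)
Definition sphere_tensor (g : V -> V -> R) (X Y Z W : V) : R :=
  g X Z * g Y W - g X W * g Y Z.

Lemma curvature_tensor_sphere (g : V -> V -> R) :
  (forall y, linear_form (fun x => g x y)) -> (forall x y, g x y = g y x) ->
  curvature_tensor (sphere_tensor g).
Proof.
move=> lg gC; have lg2 x : linear_form (g x) by move=> a u v; rewrite !(gC x) lg.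
rewrite /sphere_tensor.
split; [|split; [|split; [|split; [|split; [|split; [|split]]]]]].
- by move=> Y Z W a x y /=; rewrite !lg; ring.
- by move=> X Z W a x y /=; rewrite !lg; ring.
- by move=> X Y W a x y /=; rewrite !lg2; ring.
- by move=> X Y Z a x y /=; rewrite !lg2; ring.
- by move=> X Y Z W; ring.
- by move=> X Y Z W; ring.
- by move=> X Y Z W; rewrite (gC X Z) (gC Y W) (gC X W) (gC Y Z); ring.
- by move=> X Y Z W; rewrite (gC Z X) (gC Y X) (gC Z Y); ring.
Qed.

End CurvatureTensors.

Section PhiCurvatureIdentities.
Variables (R : realType) (V : vectType R).
Variables (phi : V -> V) (xi : V) (eta : V -> R).

Definition G1_core (T : V -> V -> V -> V -> R) :=
  forall X Y Z W, T X Y (phi Z) (phi W) = T X Y Z W.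

Definition G2_core (T : V -> V -> V -> V -> R) :=
  forall X Y Z W, T X Y Z W =
    T (phi X) Y Z (phi W) + T X (phi Y) Z (phi W) + T X Y (phi Z) (phi W).

Definition G3_core (T : V -> V -> V -> V -> R) :=
  forall X Y Z W, T X Y Z W = T (phi X) (phi Y) (phi Z) (phi W).

Definition xi_null (T : V -> V -> V -> V -> R) := forall X Y Z, T X Y Z xi = 0.

Hypothesis phi2 : forall X, phi (phi X) = - X + eta X *: xi.
Hypothesis phi_xi : phi xi = 0.

Lemma linear_form_phi2 (f : V -> R) x :
  linear_form f -> f xi = 0 -> f (phi (phi x)) = - f x.
Proof.
move=> lf fxi.
by rewrite phi2 linear_formD // linear_formN // linear_formZ // fxi mulr0 addr0.
Qed.

Variable T : V -> V -> V -> V -> R.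
Hypothesis Tc : curvature_tensor T.

Let lin1 Y Z W : linear_form (fun X => T X Y Z W). Proof. by case: Tc. Qed.
Let lin2 X Z W : linear_form (fun Y => T X Y Z W). Proof. by case: Tc => _ []. Qed.
Let lin3 X Y W : linear_form (fun Z => T X Y Z W). Proof. by case: Tc => _ [_ []]. Qed.
Let lin4 X Y Z : linear_form (T X Y Z). Proof. by case: Tc => _ [_ [_ []]]. Qed.
Let skew34 X Y Z W : T X Y Z W = - T X Y W Z.
Proof. by case: Tc => _ [_ [_ [_ [_ []]]]]. Qed.
Let pair_sym X Y Z W : T X Y Z W = T Z W X Y.
Proof. by case: Tc => _ [_ [_ [_ [_ [_ []]]]]]. Qed.

Lemma xi_null_slots : xi_null T ->
  [/\ forall Y Z W, T xi Y Z W = 0, forall X Z W, T X xi Z W = 0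
    & forall X Y W, T X Y xi W = 0].
Proof.
move=> null; split=> *; first by rewrite pair_sym skew34 null oppr0.
  by rewrite pair_sym null.
by rewrite skew34 null oppr0.
Qed.

Lemma xi_null_phi2 : xi_null T ->
  [/\ forall X Y Z W, T (phi (phi X)) Y Z W = - T X Y Z W,
      forall X Y Z W, T X (phi (phi Y)) Z W = - T X Y Z W,
      forall X Y Z W, T X Y (phi (phi Z)) W = - T X Y Z W
    & forall X Y Z W, T X Y Z (phi (phi W)) = - T X Y Z W].
Proof.
move=> null; have [null1 null2 null3] := xi_null_slots null.
split=> X Y Z W.
- exact: (linear_form_phi2 (f := fun A => T A Y Z W)).
- exact: (linear_form_phi2 (f := fun B => T X B Z W)).
- exact: (linear_form_phi2 (f := fun C => T X Y C W)).
- exact: (linear_form_phi2 (f := T X Y Z)).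
Qed.

Lemma G1_core_xi_null : G1_core T -> xi_null T.
Proof. by move=> h X Y Z; rewrite -h phi_xi linear_form0. Qed.

Lemma G2_core_xi_null : G2_core T -> xi_null T.
Proof. by move=> h X Y Z; rewrite h phi_xi !linear_form0 // !addr0. Qed.

(* By pair symmetry the first pair is phi-invariant as well, so
   T(phiX,Y,Z,phiW) = T(phi^2 X,phiY,Z,phiW) = -T(X,phiY,Z,phiW). *)
Lemma G1_core_G2_core : G1_core T -> G2_core T.
Proof.
move=> h X Y Z W; have [phi2X _ _ _] := xi_null_phi2 (G1_core_xi_null h).
have h12 A B C D : T (phi A) (phi B) C D = T A B C D by rewrite pair_sym h -pair_sym.
by rewrite h -(h12 (phi X)) phi2X addNr add0r.
Qed.

(* Contracting (G2) with phi in the last slot shows that the phi-derivation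
   D(X,Y,Z,W) = T(phiX,Y,Z,W) + ... + T(X,Y,Z,phiW) vanishes; (G3) is a
   combination of four instances of D = 0. *)
Lemma G2_core_G3_core : G2_core T -> G3_core T.
Proof.
move=> h; have [phi2X phi2Y phi2Z phi2W] := xi_null_phi2 (G2_core_xi_null h).
have D A B C E : T (phi A) B C E + T A (phi B) C E + T A B (phi C) E
                 + T A B C (phi E) = 0.
  by have := h A B C (phi E); rewrite !phi2W; lra.
move=> X Y Z W.
have := D (phi X) Y Z W; rewrite !phi2X.
have := D X (phi Y) Z W; rewrite !phi2Y.
have := D (phi X) (phi Y) (phi Z) W; rewrite phi2X phi2Y phi2Z.
have := D (phi X) (phi Y) Z (phi W); rewrite phi2X phi2Y phi2W.
lra.
Qed.

End PhiCurvatureIdentities.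

Section AlmostContactMetric.
Variables (R : realType) (V : vectType R).
Variables (phi : V -> V) (xi : V) (eta : V -> R) (g : V -> V -> R).
Hypothesis acm : almost_contact_metric phi xi eta g.

Let phi_lin : linear_map phi. Proof. by case: acm. Qed.
Let eta_lin : linear_form eta. Proof. by case: acm => _ []. Qed.
Lemma acm_g_linear y : linear_form (fun x => g x y). Proof. by case: acm => _ [_ []]. Qed.
Lemma acm_gC x y : g x y = g y x. Proof. by case: acm => _ [_ [_ []]]. Qed.
Let eta_xi : eta xi = 1. Proof. by case: acm => _ [_ [_ [_ [_ []]]]]. Qed.
Lemma acm_phi2 X : phi (phi X) = - X + eta X *: xi.
Proof. by case: acm => _ [_ [_ [_ [_ [_ []]]]]]. Qed.
Let g_phi X Y : g (phi X) (phi Y) = g X Y - eta X * eta Y.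
Proof. by case: acm => _ [_ [_ [_ [_ [_ []]]]]]. Qed.
Let g_lin2 x : linear_form (g x).
Proof. by move=> a u v; rewrite !(acm_gC x) acm_g_linear. Qed.

Let xi_neq0 : xi != 0.
Proof. by apply: contra_eq_neq eta_xi => ->; rewrite linear_form0 // eq_sym oner_eq0. Qed.

(* Computing phi^3 X as phi (phi^2 X) and as phi^2 (phi X). *)
Let eta_scale_phi_xi X : eta X *: phi xi = eta (phi X) *: xi.
Proof.
have := acm_phi2 (phi X).
rewrite [phi (phi X)]acm_phi2 (linear_mapD _ _ phi_lin) (linear_mapN _ phi_lin).
by rewrite (linear_mapZ _ _ phi_lin); apply: addrI.
Qed.

Lemma acm_phi_xi : phi xi = 0.
Proof.
have phixi : phi xi = eta (phi xi) *: xi by rewrite -eta_scale_phi_xi eta_xi scale1r.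
have : phi (phi xi) = (eta (phi xi) ^+ 2) *: xi.
  by rewrite {1}phixi linear_mapZ // -scalerA -phixi.
rewrite acm_phi2 eta_xi scale1r addNr => /esym/eqP.
by rewrite scaler_eq0 (negbTE xi_neq0) orbF sqrf_eq0 => /eqP c0; rewrite phixi c0 scale0r.
Qed.

Lemma acm_eta_phi X : eta (phi X) = 0.
Proof.
apply/eqP; have := eta_scale_phi_xi X; rewrite acm_phi_xi scaler0 => /esym/eqP.
by rewrite scaler_eq0 (negbTE xi_neq0) orbF.
Qed.

Lemma acm_g_xi X : g X xi = eta X.
Proof.
have := g_phi X xi; rewrite acm_phi_xi linear_form0 // eta_xi mulr1 => /esym/eqP.
by rewrite subr_eq0 => /eqP.
Qed.

Lemma acm_g_phiC X Y : g (phi X) Y = - g X (phi Y).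
Proof.
have := g_phi X (phi Y).
rewrite acm_phi2 linear_formD // linear_formN // linear_formZ // acm_g_xi.
by rewrite !acm_eta_phi !mulr0 subr0 addr0 => <-; rewrite opprK.
Qed.

Lemma sphere_tensor_G2_defect X Y Z W :
  sphere_tensor g (phi X) Y Z (phi W) + sphere_tensor g X (phi Y) Z (phi W)
  + sphere_tensor g X Y (phi Z) (phi W) =
  sphere_tensor g X Y Z W + g Y Z * eta X * eta W - g X Z * eta Y * eta W.
Proof. by rewrite /sphere_tensor !g_phi !acm_g_phiC; ring. Qed.

Lemma sphere_tensor_G3_defect X Y Z W :
  sphere_tensor g (phi X) (phi Y) (phi Z) (phi W) =
  sphere_tensor g X Y Z W - g X Z * eta Y * eta W - g Y W * eta X * eta Z
  + g X W * eta Y * eta Z + g Y Z * eta X * eta W.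
Proof. by rewrite /sphere_tensor !g_phi; ring. Qed.

Variable Rt : V -> V -> V -> V -> R.
Let S X Y Z W := Rt X Y Z W - sphere_tensor g X Y Z W.

Lemma G1_core_of_G1 : G1 phi eta g Rt -> G1_core phi S.
Proof. by move=> h X Y Z W; have := h X Y Z W; rewrite /S /sphere_tensor; lra. Qed.

Lemma G2_coreE : G2 phi eta g Rt <-> G2_core phi S.
Proof.
split=> h X Y Z W; have := sphere_tensor_G2_defect X Y Z W; have := h X Y Z W;
  rewrite /S (acm_gC Z Y); lra.
Qed.

Lemma G3_of_G3_core : G3_core phi S -> G3 phi eta g Rt.
Proof.
move=> h X Y Z W; have := sphere_tensor_G3_defect X Y Z W; have := h X Y Z W.
rewrite /S (acm_gC Z Y); lra.
Qed.

End AlmostContactMetric.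

Theorem mainTheorem5 (R : realType) (V : vectType R)
    (phi : V -> V) (xi : V) (eta : V -> R) (g : V -> V -> R)
    (Rt : V -> V -> V -> V -> R) :
  almost_contact_metric phi xi eta g ->
  curvature_tensor Rt ->
  (G1 phi eta g Rt -> G2 phi eta g Rt) /\ (G2 phi eta g Rt -> G3 phi eta g Rt).
Proof.
move=> acm Rc.
have Sc := curvature_tensorB Rc
  (curvature_tensor_sphere (acm_g_linear acm) (acm_gC acm)).
have phi2 := acm_phi2 acm; have phi_xi := acm_phi_xi acm.
split=> [/G1_core_of_G1 G1S | /(G2_coreE acm Rt) G2S].
- exact/(G2_coreE acm Rt)/(G1_core_G2_core phi2 phi_xi Sc G1S).
- exact/(G3_of_G3_core acm)/(G2_core_G3_core phi2 phi_xi Sc G2S).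
Qed.
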